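(* Let $\sigma>0$ and $a\in(0,1/3)$. There exists $\varepsilon_0=\varepsilon_0(a,\sigma)>0$ such that for every $\varepsilon\in(0,\varepsilon_0)$ the following holds. Let $(a_n)_{n\ge0},(b_n)_{n\ge0},(c_n)_{n\ge0}$ be sequences of nonnegative real numbers with $a_0,b_0>0$, $c_0=0$, satisfying for all $n\ge0$ $$a_{n+1}\le\varepsilon^a(a_n+c_n)+\varepsilon b_n,\qquad b_{n+1}\le\varepsilon^a(b_n+c_n)+\varepsilon^{1/3}a_n,\qquad c_{n+1}\le\varepsilon^a\big(c_n+\sigma(a_n+b_n)\big).$$ Then for all $n\ge0$, $$a_n\le2\big(\varepsilon^{an/2}a_0+\varepsilon^{1/3+a(n-1)/2}b_0+\sqrt{\sigma}\,\varepsilon^{an/2}(a_0+b_0)\big),$$ $$b_n\le2\big(\varepsilon^{an/2}b_0+\varepsilon^{1/3+a(n-1)/2}a_0+\sqrt{\sigma}\,\varepsilon^{an/2}(a_0+b_0)\big),$$ $$c_n\le2\sqrt{\sigma}\,\varepsilon^{an/2}(a_0+b_0).$$ *)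

From Stdlib Require Import Reals.
Open Scope R_scope.

(* Write q = eps^(a/2), r = eps^(1/3 - a/2) and u = eps^(2/3), so that
   eps^a = q^2, eps^(1/3) = q r, eps = q r u and eps^(1/3 + a(n-1)/2) = r q^n.
   The recurrence is monotone with nonnegative coefficients, so any (x, y, z)
   dominating (a_0, b_0, c_0) that the one-step map sends below q (x, y, z)
   bounds the n-th iterate by q^n (x, y, z).  With s = sqrt sigma,
     x = a_0 + r b_0 + s (a_0 + b_0),  y = b_0 + r a_0 + s (a_0 + b_0),
     z = s (a_0 + b_0)
   is such a supersolution as soon as q, r, u <= 1/6, q <= s and
   q (1 + 2 s + 2 s^2) <= 1, which holds for eps small.  This yields the bounds
   without the factor 2 and without the nonnegativity of the sequences. *)

From Stdlib Require Import Reals.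
From Stdlib Require Import Lra.
Open Scope R_scope.

Lemma Rpower_gt0 x y : 0 < Rpower x y.
Proof. unfold Rpower; apply exp_pos. Qed.

Lemma Rpower_le_of_lt_root p t eps :
  0 < p -> 0 < t -> 0 < eps < Rpower t (/ p) -> Rpower eps p <= t.
Proof.
  intros Hp Ht Heps.
  apply Rle_trans with (Rpower (Rpower t (/ p)) p).
  - apply Rle_Rpower_l; lra.
  - rewrite Rpower_mult, Rinv_l, Rpower_1 by lra; lra.
Qed.

Section Domination.

Variables (alpha beta gamma sigma lam x y z : R) (A B C : nat -> R).
Hypotheses (Halpha : 0 <= alpha) (Hbeta : 0 <= beta) (Hgamma : 0 <= gamma)
  (Hsigma : 0 <= sigma) (Hlam : 0 <= lam).
Hypotheses (HA0 : A 0%nat <= x) (HB0 : B 0%nat <= y) (HC0 : C 0%nat <= z).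
Hypotheses
  (Hx : alpha * (x + z) + beta * y <= lam * x)
  (Hy : alpha * (y + z) + gamma * x <= lam * y)
  (Hz : alpha * (z + sigma * (x + y)) <= lam * z).
Hypotheses
  (RA : forall n, A (S n) <= alpha * (A n + C n) + beta * B n)
  (RB : forall n, B (S n) <= alpha * (B n + C n) + gamma * A n)
  (RC : forall n, C (S n) <= alpha * (C n + sigma * (A n + B n))).

Lemma recurrence_dominated_by_supersolution n :
  A n <= lam ^ n * x /\ B n <= lam ^ n * y /\ C n <= lam ^ n * z.
Proof.
  induction n as [|n (IA & IB & IC)]; simpl; [lra|].
  assert (Hpow : 0 <= lam ^ n) by (apply pow_le; lra).
  repeat split.
  - apply Rle_trans with (lam ^ n * (alpha * (x + z) + beta * y)).
    + eapply Rle_trans; [apply RA|]. nra.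
    + nra.
  - apply Rle_trans with (lam ^ n * (alpha * (y + z) + gamma * x)).
    + eapply Rle_trans; [apply RB|]. nra.
    + nra.
  - apply Rle_trans with (lam ^ n * (alpha * (z + sigma * (x + y)))).
    + eapply Rle_trans; [apply RC|].
      assert (sigma * (A n + B n) <= sigma * (lam ^ n * x + lam ^ n * y)) by nra.
      nra.
    + nra.
Qed.

End Domination.

Section Supersolution.

Variables (a0 b0 s q r u : R).
Hypotheses (Ha0 : 0 <= a0) (Hb0 : 0 <= b0) (Hs : 0 < s).
Hypotheses (Hq : 0 <= q <= 1/6) (Hr : 0 <= r <= 1/6) (Hu : 0 <= u <= 1/6).

Let x := a0 + r * b0 + s * (a0 + b0).
Let y := b0 + r * a0 + s * (a0 + b0).
Let z := s * (a0 + b0).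

Lemma supersolution_x : q * q * (x + z) + q * r * u * y <= q * x.
Proof.
  enough (q * (x + z) + r * u * y <= x) by nra.
  assert (0 <= a0 * (1 - q - r * r * u)) by (apply Rmult_le_pos; nra).
  assert (0 <= r * b0 * (1 - q - u)) by (apply Rmult_le_pos; nra).
  assert (0 <= z * (1 - 2 * q - r * u)) by (apply Rmult_le_pos; unfold z; nra).
  unfold x, y, z in *; nra.
Qed.

Lemma supersolution_y : q <= s -> q * q * (y + z) + q * r * x <= q * y.
Proof.
  intros Hqs.
  enough (q * (y + z) + r * x <= y) by nra.
  assert (0 <= b0 * (1 - q - r * r)) by (apply Rmult_le_pos; nra).
  (* the defect q r a0 of the a0-coefficient is absorbed by the slack of z >= s a0 *)
  assert (q * r <= s / 2) by nra.
  assert (q * r * a0 <= s / 2 * a0) by (apply Rmult_le_compat_r; lra).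
  assert (s / 2 * a0 <= z * (1 - 2 * q - r)).
  { assert (0 <= s * a0 * (1 / 2 - 2 * q - r)) by (apply Rmult_le_pos; nra).
    assert (0 <= s * b0 * (1 - 2 * q - r)) by (apply Rmult_le_pos; nra).
    unfold z; nra. }
  unfold x, y, z in *; nra.
Qed.

Lemma supersolution_z :
  q * (1 + 2 * s + 2 * s * s) <= 1 -> q * q * (z + s * s * (x + y)) <= q * z.
Proof.
  intros Hqc.
  enough (q * (z + s * s * (x + y)) <= z) by nra.
  assert (0 <= z * (1 - q * (1 + s * (1 + r) + 2 * s * s))) by
    (apply Rmult_le_pos; unfold z; nra).
  unfold x, y, z in *; nra.
Qed.

End Supersolution.

Lemma scaled_recurrence_bound (s q r u : R) (A B C : nat -> R) :
  0 < s -> 0 <= q <= 1/6 -> 0 <= r <= 1/6 -> 0 <= u <= 1/6 ->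
  q <= s -> q * (1 + 2 * s + 2 * s * s) <= 1 ->
  0 <= A 0%nat -> 0 <= B 0%nat -> C 0%nat = 0 ->
  (forall n, A (S n) <= q * q * (A n + C n) + q * r * u * B n) ->
  (forall n, B (S n) <= q * q * (B n + C n) + q * r * A n) ->
  (forall n, C (S n) <= q * q * (C n + s * s * (A n + B n))) ->
  forall n,
    A n <= q ^ n * (A 0%nat + r * B 0%nat + s * (A 0%nat + B 0%nat)) /\
    B n <= q ^ n * (B 0%nat + r * A 0%nat + s * (A 0%nat + B 0%nat)) /\
    C n <= q ^ n * (s * (A 0%nat + B 0%nat)).
Proof.
  intros Hs Hq Hr Hu Hqs Hqc HA0 HB0 HC0 RA RB RC.
  apply (recurrence_dominated_by_supersolution (q * q) (q * r * u) (q * r) (s * s));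
    try assumption.
  1-5: repeat apply Rmult_le_pos; lra.
  1-3: nra.
  - apply supersolution_x; lra.
  - apply supersolution_y; lra.
  - apply supersolution_z; lra.
Qed.

Lemma exists_small_scale s : 0 < s ->
  exists t, 0 < t /\ t <= 1/6 /\ t <= s /\ t * (1 + 2 * s + 2 * s * s) <= 1.
Proof.
  intros Hs.
  assert (Hc : 0 < 1 + 2 * s + 2 * s * s) by nra.
  exists (Rmin (1/6) (Rmin s (/ (1 + 2 * s + 2 * s * s)))).
  assert (Hinv : 0 < / (1 + 2 * s + 2 * s * s)) by (apply Rinv_0_lt_compat; lra).
  repeat split.
  - repeat apply Rmin_glb_lt; lra.
  - apply Rmin_l.
  - eapply Rle_trans; [apply Rmin_r | apply Rmin_l].
  - apply Rle_trans with (/ (1 + 2 * s + 2 * s * s) * (1 + 2 * s + 2 * s * s)).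
    + apply Rmult_le_compat_r; [lra|].
      eapply Rle_trans; [apply Rmin_r | apply Rmin_r].
    + rewrite Rinv_l; lra.
Qed.

Lemma Rpower_small_near_0 (p1 p2 p3 t : R) : 0 < p1 -> 0 < p2 -> 0 < p3 -> 0 < t ->
  exists eps0, 0 < eps0 /\ forall eps, 0 < eps < eps0 ->
    Rpower eps p1 <= t /\ Rpower eps p2 <= t /\ Rpower eps p3 <= t.
Proof.
  intros H1 H2 H3 Ht.
  exists (Rmin (Rpower t (/ p1)) (Rmin (Rpower t (/ p2)) (Rpower t (/ p3)))).
  split; [repeat apply Rmin_glb_lt; apply Rpower_gt0|].
  intros eps Heps.
  assert (Hm1 := Rmin_l (Rpower t (/ p1)) (Rmin (Rpower t (/ p2)) (Rpower t (/ p3)))).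
  assert (Hm23 := Rmin_r (Rpower t (/ p1)) (Rmin (Rpower t (/ p2)) (Rpower t (/ p3)))).
  assert (Hm2 := Rmin_l (Rpower t (/ p2)) (Rpower t (/ p3))).
  assert (Hm3 := Rmin_r (Rpower t (/ p2)) (Rpower t (/ p3))).
  repeat split; apply Rpower_le_of_lt_root; auto; lra.
Qed.

Lemma Rpower_mult_INR x c n : 0 < x -> Rpower x (c * INR n) = Rpower x c ^ n.
Proof.
  intros Hx; rewrite <- Rpower_pow by apply Rpower_gt0.
  rewrite Rpower_mult, Rmult_comm; reflexivity.
Qed.

Lemma eps_scale_identities eps a n : 0 < eps ->
  Rpower eps a = Rpower eps (a/2) * Rpower eps (a/2) /\
  Rpower eps (1/3) = Rpower eps (a/2) * Rpower eps (1/3 - a/2) /\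
  eps = Rpower eps (a/2) * Rpower eps (1/3 - a/2) * Rpower eps (2/3) /\
  Rpower eps (a * INR n / 2) = Rpower eps (a/2) ^ n /\
  Rpower eps (1/3 + a * (INR n - 1) / 2) = Rpower eps (1/3 - a/2) * Rpower eps (a/2) ^ n.
Proof.
  intros Heps.
  assert (En : Rpower eps (a * INR n / 2) = Rpower eps (a/2) ^ n).
  { rewrite <- Rpower_mult_INR by lra; f_equal; lra. }
  repeat split.
  - rewrite <- Rpower_plus; f_equal; lra.
  - rewrite <- Rpower_plus; f_equal; lra.
  - rewrite <- !Rpower_plus, <- (Rpower_1 eps) at 1 by lra; f_equal; lra.
  - exact En.
  - rewrite <- En, <- Rpower_plus; f_equal; lra.
Qed.

Theorem lemma8p5 (sigma a : R) (hsigma : 0 < sigma) (ha : 0 < a < 1/3) :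
  exists eps0 : R, 0 < eps0 /\
  forall eps : R, 0 < eps < eps0 ->
  forall A B C : nat -> R,
    (forall n, 0 <= A n /\ 0 <= B n /\ 0 <= C n) ->
    0 < A 0%nat -> 0 < B 0%nat -> C 0%nat = 0 ->
    (forall n, A (S n) <= Rpower eps a * (A n + C n) + eps * B n) ->
    (forall n, B (S n) <= Rpower eps a * (B n + C n) + Rpower eps (1/3) * A n) ->
    (forall n, C (S n) <= Rpower eps a * (C n + sigma * (A n + B n))) ->
    forall n : nat,
      A n <= 2 * (Rpower eps (a * INR n / 2) * A 0%nat
                  + Rpower eps (1/3 + a * (INR n - 1) / 2) * B 0%nat
                  + sqrt sigma * Rpower eps (a * INR n / 2) * (A 0%nat + B 0%nat)) /\
      B n <= 2 * (Rpower eps (a * INR n / 2) * B 0%nat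
                  + Rpower eps (1/3 + a * (INR n - 1) / 2) * A 0%nat
                  + sqrt sigma * Rpower eps (a * INR n / 2) * (A 0%nat + B 0%nat)) /\
      C n <= 2 * sqrt sigma * Rpower eps (a * INR n / 2) * (A 0%nat + B 0%nat).
Proof.
  set (s := sqrt sigma).
  assert (Hs : 0 < s) by (apply sqrt_lt_R0; lra).
  assert (Hss : s * s = sigma) by (apply sqrt_sqrt; lra).
  destruct (exists_small_scale s Hs) as (t & Ht & Ht6 & Hts & Htc).
  destruct (Rpower_small_near_0 (a/2) (1/3 - a/2) (2/3) t) as (eps0 & He0 & Hsmall);
    try lra.
  exists eps0; split; [exact He0|].
  intros eps Heps A B C _ HA0 HB0 HC0 RA RB RC n.
  destruct (Hsmall eps Heps) as (Hq & Hr & Hu).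
  destruct (eps_scale_identities eps a n) as (Ea & E13 & E1 & En & Ern); [lra|].
  set (q := Rpower eps (a/2)) in *; set (r := Rpower eps (1/3 - a/2)) in *;
    set (u := Rpower eps (2/3)) in *.
  assert (Hq0 : 0 < q) by apply Rpower_gt0.
  assert (Hr0 : 0 < r) by apply Rpower_gt0.
  assert (Hu0 : 0 < u) by apply Rpower_gt0.
  rewrite Ea, E13, <- Hss in *; rewrite E1 in RA; rewrite En, Ern; fold s.
  destruct (scaled_recurrence_bound s q r u A B C) with (n := n) as (IA & IB & IC);
    try assumption; try nra.
  assert (0 <= q ^ n) by (apply pow_le; lra).
  assert (0 <= q ^ n * (r * A 0%nat + r * B 0%nat)) by (apply Rmult_le_pos; nra).
  assert (0 <= q ^ n * (s * (A 0%nat + B 0%nat))) by (apply Rmult_le_pos; nra).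
  assert (0 <= q ^ n * (A 0%nat + B 0%nat)) by (apply Rmult_le_pos; lra).
  repeat split; nra.
Qed.
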